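(* Let $G$ be a countable group and $\nu$ a probability measure of full support on $G$; let $(z_1,z_2,\ldots)$, $z_n = x_1\cdots x_n$, denote a trajectory of the $\nu$-random walk. Let $W_i, W'_i\subseteq G$, $i\in\mathbb N$, be subsets with $W'_i\subseteq W_i$ for all $i$ and $W_i\cap W_j=\varnothing$ for $i\neq j$. For $g\in G$ let $\mathrm{rank}(g)=i$ if $g\in W_i$ and $\mathrm{rank}(g)=0$ if $g\notin\bigcup_i W_i$. Let $p:\bigcup_{i}W_i\to G$ be a function. Assume: (1) $\mathrm{rank}(p(g))<\mathrm{rank}(g)$ for every $g\in\bigcup_i W_i$; (2) for every $h\in G$ there is $N$ such that for all $i>N$ we have $hW'_i\subseteq W_i$ and $p(hw)=h\,p(w)$ for all $w\in W'_i$; (3) for almost every trajectory $(z_1,z_2,\ldots)$ there is $i_0$ such that for every $i>i_0$ there is $j$ with $z_i\in W'_j$; (4) for almost every trajectory there is $i_0$ such that for all $i>i_0$, either $p(z_{i+1})=p(z_i)$ or $p(z_{i+1})=z_i$; (5) for almost every trajectory the sequence $(\mathrm{rank}(z_i))_i$ is unbounded. Then the Poisson–Furstenberg boundary $\partial(G,\nu)$ is non-trivial, and moreover the action of $G$ on $\partial(G,\nu)$ is essentially free.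
   Context: The Poisson–Furstenberg boundary $\partial(G,\nu)$ is the space of ergodic components of the time shift on the space $G^{\mathbb N}$ of trajectories of the $\nu$-random walk (for non-degenerate $\nu$ equivalently the tail boundary), with $G$ acting by left multiplication on trajectories. Essentially free means that for each $h\neq 1$, almost every boundary point is not fixed by $h$. *)

From HB Require Import structures.
From mathcomp Require Import all_boot all_order all_algebra.
From mathcomp Require Import all_classical all_reals all_analysis.

Set Implicit Arguments.
Unset Strict Implicit.
Unset Printing Implicit Defensive.

Import Order.TTheory GRing.Theory Num.Theory.
Local Open Scope classical_set_scope.

#[short(type="countGroupType")]
HB.structure Definition CountGroup := {G of Group G & Countable G}.

Section RandomWalk.
Variable G : countGroupType.

(** The space of trajectories [w : nat -> G]; [w n] is [z_n = x_1 ... x_n],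
    with [z_0 = 1]. *)
Definition traj := nat -> G.
HB.instance Definition _ := gen_eqMixin traj.
HB.instance Definition _ := gen_choiceMixin traj.
HB.instance Definition _ := isPointed.Build traj (fun _ => 1%g).

(** Cylinder sets [{w | w n = g}]; they generate the product sigma-algebra
    of the discrete space G on G^nat. *)
Definition cylinders : set (set traj) :=
  [set A | exists (n : nat) (g : G), A = [set w : traj | w n = g]].

Definition Omega := g_sigma_algebraType cylinders.

Definition shift (w : Omega) : Omega := fun n => w n.+1.
Definition lact (h : G) (w : Omega) : Omega := fun n => (h * w n)%g.

Variable R : realType.

(** These finite-dimensional distributions determine P uniquely. *)
Definition random_walk_law (nu : G -> R) (P : probability Omega R) : Prop :=
  forall (n : nat) (g : nat -> G),
    P [set w : Omega | forall k, (k <= n)%N -> w k = g k] =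
    (((g 0%N == 1%g)%:R * \prod_(k < n) nu ((g k)^-1 * g k.+1)%g)%R)%:E.

(** Shift-invariant measurable sets: the sigma-algebra whose (mod 0) quotient
    is the space of ergodic components of the shift, i.e. the Poisson boundary. *)
Definition shift_invariant (A : set Omega) : Prop :=
  measurable A /\ shift @^-1` A = A.

Definition boundary_nontrivial (P : probability Omega R) : Prop :=
  exists A : set Omega, shift_invariant A /\ (0 < P A)%E /\ (P A < 1)%E.

(** The boundary point
    of [w] is its ergodic component; the boundary point of [w] and that of
    [h w] (= h applied to the boundary point of w) differ iff some member of a
    countable family of invariant sets separates them (the boundary is a
    standard measure space, so its Borel structure is countably separated). *)
Definition boundary_essentially_free (P : probability Omega R) : Prop :=
  forall h : G, h <> 1%g ->
    exists A : nat -> set Omega,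
      (forall k, shift_invariant (A k)) /\
      {ae P, forall w : Omega, exists k,
          (A k w /\ ~ A k (lact h w)) \/ (~ A k w /\ A k (lact h w))}.

End RandomWalk.

(** rank g = i if g \in W_i, and 0 if g is in no W_i
    (well defined when the W_i are pairwise disjoint). *)
Definition rank (G : Type) (W : nat -> set G) (g : G) : nat :=
  match pselect (exists i, W i g) with
  | left e => projT1 (cid e)
  | right _ => 0%N
  end.

(* Freeness implies non-triviality: by the Markov property at time 1,
   P (A `&` [z_1 = h]) = nu h * P (h^-1 A) for a shift-invariant A, so if
   every invariant set had measure 0 or 1, then A and h^-1 A would agree
   almost surely and no invariant set could separate z from h z.
   For freeness fix h <> 1 and a typical trajectory z.  If the parents
   p (z_i) are eventually equal to some g, then "deep points have parent g
   infinitely often" holds for z but not for h z, whose deep parents are h g.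
   Otherwise there are infinitely many parent times t, with
   p (z_(t+1)) = z_t; their ranks increase and z_t is an ancestor of every
   later point.  If beyond the range where h commutes with p every such z_t
   were also an ancestor of the deep points of h z, they would all be
   ancestors of the single point h p (z_t0), which is impossible for points
   of unbounded rank.  Indexing these invariant sets by (bool * G) gives the
   required countable separating family. *)

From Pilot Require Import Defs.
From HB Require Import structures.
From mathcomp Require Import all_boot all_order all_algebra.
From mathcomp Require Import all_classical all_reals all_analysis.
From mathcomp Require Import zify.

Import Order.TTheory GRing.Theory Num.Theory.
Local Open Scope classical_set_scope.

Set Implicit Arguments.
Unset Strict Implicit.
Unset Printing Implicit Defensive.

Lemma unbounded_late (f : nat -> nat) : (forall M, exists i, (M < f i)%N) ->
  forall M m, exists2 i, (m <= i)%N & (M < f i)%N.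
Proof.
move=> f_unbounded M m; pose B := \max_(k < m) f k.
have [i Mi] := f_unbounded (maxn B M); exists i; last first.
  by apply: leq_ltn_trans Mi; exact: leq_maxr.
rewrite leqNgt; apply/negP => im; move: Mi; rewrite ltnNge => /negP; apply.
exact: leq_trans (leq_bigmax (Ordinal im)) (leq_maxl _ _).
Qed.

Lemma iter_cycle_bounded (T : Type) (f : T -> T) y a b :
  (a < b)%N -> iter a f y = iter b f y ->
  forall n, exists2 n', (n' < b)%N & iter n f y = iter n' f y.
Proof.
move=> ab eab; elim/ltn_ind => n IH; have [nb|bn] := ltnP n b; first by exists n.
have -> : iter n f y = iter (n - b + a) f y by rewrite -[in LHS](subnK bn) !iterD eab.
apply: IH; lia.
Qed.

Section ProbabilityFacts.
Context d (T : measurableType d) (R : realType) (P : probability T R).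
Implicit Type A : set T.

Lemma probability_ae_ex (Q : T -> Prop) : {ae P, forall x, Q x} -> exists x, Q x.
Proof.
move=> aeQ; have PT_gt0 : (0 < P setT)%E by rewrite probability_setT lte01.
exact: (@filter_ex _ _ (ae_properfilter_algebraOfSetsType PT_gt0) _ aeQ).
Qed.

Lemma probability_setC0 A : measurable A -> P A = 1%E -> P (~` A) = 0%E.
Proof. by move=> mA PA; rewrite probability_setC // PA subee. Qed.

Lemma ae_notin_null A : measurable A -> P A = 0%E -> {ae P, forall x, ~ A x}.
Proof. by move=> mA PA0; apply/negligibleP; rewrite /= ?setCK. Qed.

Lemma ae_in_full A : measurable A -> P A = 1%E -> {ae P, forall x, A x}.
Proof.
move=> mA /(probability_setC0 mA)/(ae_notin_null (measurableC mA)).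
by apply: filterS => x /contrapT.
Qed.

End ProbabilityFacts.

Section TrajectoryMeasurability.
Variable G : countGroupType.
Local Notation Om := (Omega G).
Local Notation shift := (@Defs.shift G).

Lemma measurable_coord_eq n (x : G) : measurable [set w : Om | w n = x].
Proof. by apply: sub_sigma_algebra; exists n, x. Qed.

Lemma measurable_coord n (Q : set G) : measurable [set w : Om | Q (w n)].
Proof.
have -> : [set w : Om | Q (w n)] = \bigcup_(x in Q) [set w | w n = x].
  by apply/seteqP; split => [w Qw|w [x Qx /= ->]] //; exists (w n).
rewrite bigcup_mkcond; apply: countable_bigcupT_measurable => [|x].
  exact: countableP.
by case: ifP => _; [exact: measurable_coord_eq|exact: measurable0].
Qed.

Definition cylinder n (g : nat -> G) : set Om :=
  [set w | forall k, (k <= n)%N -> w k = g k].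

Lemma measurable_cylinder n g : measurable (cylinder n g).
Proof.
have -> : cylinder n g =
    \bigcap_(k in [set k | (k <= n)%N]) [set w | w k = g k].
  by apply/seteqP; split => w /= wg k; apply: wg.
by apply: bigcap_measurable => [|k _]; [exists 0%N|exact: measurable_coord_eq].
Qed.

Definition cylinder_system : set (set Om) :=
  [set A | A = setT \/ A = set0 \/ exists n g, A = cylinder n g].

Lemma setI_closed_cylinder_system : setI_closed cylinder_system.
Proof.
have cylinderI n m g g' : (n <= m)%N ->
    cylinder_system (cylinder n g `&` cylinder m g').
  move=> nm; have [gg'|gg'] := pselect (forall k, (k <= n)%N -> g k = g' k).
    right; right; exists m, g'; apply/seteqP; split => [w [] //|w wg'].
    by split => // k kn; rewrite gg' // wg' // (leq_trans kn).
  right; left; apply/seteqP; split => // w [wg wg']; apply: gg' => k kn.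
  by rewrite -wg // wg' // (leq_trans kn).
move=> A B [->|[->|[n [g ->]]]] [->|[->|[m [g' ->]]]];
  rewrite ?setTI ?setIT ?set0I ?setI0;
  try by [left|right; left|right; right; exists n, g|right; right; exists m, g'].
have [nm|mn] := leqP n m; first exact: cylinderI.
by rewrite setIC; apply: cylinderI; exact: ltnW.
Qed.

(* Each coordinate set is the countable union of the cylinders through the
   finitely many earlier coordinates. *)
Lemma measurable_cylinder_system : @measurable _ Om = <<s cylinder_system >>.
Proof.
apply/seteqP; split; apply: smallest_sub.
- exact: smallest_sigma_algebra.
- move=> _ [n [x ->]].
  pose C (t : n.+1.-tuple G) : set Om :=
    if tnth t (inord n) == x then cylinder n (fun k => tnth t (inord k))
    else set0.
  have -> : [set w : Om | w n = x] = \bigcup_t C t.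
    apply/seteqP; split => w /=.
      move=> wx; exists [tuple w k | k < n.+1] => //.
      rewrite /C tnth_mktuple inordK // wx eqxx => k kn.
      by rewrite tnth_mktuple inordK.
    case=> t _; rewrite /C; case: eqP => // <- wt.
    by rewrite wt.
  apply: (@countable_bigcupT_measurable _ (g_sigma_algebraType cylinder_system)).
    exact: countableP.
  move=> t; rewrite /C; case: ifP => _; last exact: measurable0.
  by apply: sub_sigma_algebra; right; right; eexists _, _.
- exact: sigma_algebra_measurable.
- move=> _ [->|[->|[n [g ->]]]]; [exact: measurableT|exact: measurable0|].
  exact: measurable_cylinder.
Qed.

Lemma measurable_shift : measurable_fun setT shift.
Proof.
apply: (@measurability _ _ Om Om setT _ (@cylinders G)) => //.
move=> _ [_ [n [g ->]] <-].
by rewrite setTI; exact: (measurable_coord_eq n.+1 g).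
Qed.

Lemma measurable_lact (h : G) : measurable_fun setT (lact h).
Proof.
apply: (@measurability _ _ Om Om setT _ (@cylinders G)) => //.
move=> _ [_ [n [g ->]] <-].
have -> : lact h @^-1` [set w | w n = g] = [set w | w n = h^-1 * g]%g.
  apply/seteqP; split => w; rewrite /= /lact; [move=> <-|move=> ->].
    by rewrite mulKg.
  by rewrite mulVKg.
by rewrite setTI; exact: measurable_coord_eq.
Qed.

Lemma measurable_preimage_shift (A : set Om) :
  measurable A -> measurable (shift @^-1` A).
Proof. by move=> mA; rewrite -[X in measurable X]setTI; exact: measurable_shift. Qed.

Lemma measurable_preimage_lact (h : G) (A : set Om) :
  measurable A -> measurable (lact h @^-1` A).
Proof. by move=> mA; rewrite -[X in measurable X]setTI; exact: measurable_lact. Qed.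

Definition infinitely_often (Q : nat -> G -> Prop) : set Om :=
  [set w | forall M, exists2 i, (M <= i)%N & Q M (w i)].

Lemma infinitely_often_invariant (Q : nat -> G -> Prop) :
  (forall M x, Q M.+1 x -> Q M x) -> shift_invariant (infinitely_often Q).
Proof.
move=> QS; split.
  have -> : infinitely_often Q =
      \bigcap_M \bigcup_(i in [set i | (M <= i)%N]) [set w : Om | Q M (w i)].
    apply/seteqP; split => w /= wQ M => [_|].
      by have [i Mi Qi] := wQ M; exists i.
    by have [i Mi Qi] := wQ M I; exists i.
  apply: bigcapT_measurable => M; apply: bigcup_measurable => i _.
  exact: measurable_coord.
apply/seteqP; split => w /= wQ M.
  by have [i Mi Qi] := wQ M; exists i.+1 => //; exact: leqW.
have [[|i] // Mi Qi] := wQ M.+1; exists i => //; exact: QS.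
Qed.

End TrajectoryMeasurability.

Section MarkovProperty.
Variables (R : realType) (G : countGroupType) (nu : G -> R).
Hypothesis nu_gt0 : forall g, (0 < nu g)%R.
Variable P : probability (Omega G) R.
Hypothesis P_law : random_walk_law nu P.
Local Notation Om := (Omega G).
Local Notation shift := (@Defs.shift G).
Local Open Scope ereal_scope.
Implicit Types (h : G) (A S : set Om).

Lemma measure_start1 S : measurable S -> P S = P (S `&` cylinder 0 (fun=> 1%g)).
Proof.
have mC := @measurable_cylinder G 0 (fun=> 1%g).
move=> mS; rewrite (measureDI P mS mC) -[RHS]add0e; congr (_ + _).
apply: (subset_measure0 (measurableD mS mC) (measurableC mC)) => [w []//|].
by apply: probability_setC0 => //; rewrite P_law big_ord0 eqxx mulr1.
Qed.

Lemma measure_shift_cylinder n (g : nat -> G) : P (shift @^-1` cylinder n g) =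
  (nu (g 0%N) * \prod_(k < n) nu ((g k)^-1 * g k.+1)%g)%:E.
Proof.
pose g1 k := if k is k'.+1 then g k' else 1%g.
rewrite measure_start1; last exact: measurable_preimage_shift (measurable_cylinder _ _).
have -> : shift @^-1` cylinder n g `&` cylinder 0 (fun=> 1%g) = cylinder n.+1 g1.
  apply/seteqP; split => [w [wg w0] [|k] kn|w wg1]; first exact: w0.
  - exact: wg.
  - split => [k kn|k]; first exact: (wg1 k.+1).
    by rewrite leqn0 => /eqP->; exact: (wg1 0%N).
by rewrite P_law big_ord_recl /= eqxx invg1 mul1g !mul1r.
Qed.

Lemma preimage_lact_cylinder h n (g : nat -> G) :
  lact h @^-1` cylinder n g = cylinder n (fun k => h^-1 * g k)%g.
Proof.
apply/seteqP; split => w /= wg k kn; have := wg k kn; rewrite /lact.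
  by move=> <-; rewrite mulKg.
by move=> ->; rewrite mulVKg.
Qed.

Lemma markov_shift_cylinder h n (g : nat -> G) :
  P (shift @^-1` cylinder n g `&` [set w | w 1%N = h]) =
  (nu h)%:E * P (lact h @^-1` cylinder n g).
Proof.
rewrite preimage_lact_cylinder P_law -EFinM.
have cancel_h a b : ((h^-1 * a)^-1 * (h^-1 * b) = a^-1 * b)%g.
  by rewrite invgM invgK -mulgA mulVKg.
under eq_bigr do rewrite cancel_h.
have [<-|g0h] := eqVneq (g 0%N) h.
  have -> : shift @^-1` cylinder n g `&` [set w | w 1%N = g 0%N] =
      shift @^-1` cylinder n g.
    by apply/setIidl => w wg; exact: (wg 0%N).
  by rewrite measure_shift_cylinder mulVg eqxx mul1r.
have -> : shift @^-1` cylinder n g `&` [set w | w 1%N = h] = set0.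
  by apply/seteqP; split => // w [wg w1]; move: g0h; rewrite -(wg 0%N) // => /eqP.
have /negbTE-> : (h^-1 * g 0%N)%g != 1%g.
  by apply: contra_neq g0h => e; rewrite -[g 0%N](mulVKg h) e mulg1.
by rewrite measure0 mul0r mulr0.
Qed.

Let restricted_shift h : measure Om R.
Proof.
refine (pushforward (mrestr P (measurable_coord_eq 1 h)) shift).
exact: measurable_shift.
Defined.

Let scaled_lact h : measure Om R.
Proof.
refine (mscale (NngNum (ltW (nu_gt0 h))) (pushforward P (lact h))).
exact: measurable_lact.
Defined.

Lemma shift_markov h A : measurable A ->
  P (shift @^-1` A `&` [set w | w 1%N = h]) = (nu h)%:E * P (lact h @^-1` A).
Proof.
move=> mA.
have -> : P (shift @^-1` A `&` [set w | w 1%N = h]) = restricted_shift h A by [].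
have -> : (nu h)%:E * P (lact h @^-1` A) = scaled_lact h A by [].
apply: (measure_unique (@cylinder_system G) (fun=> setT)) => //.
- exact: measurable_cylinder_system.
- exact: setI_closed_cylinder_system.
- by move=> _; left.
- by apply/seteqP; split => // w _; exists 0%N.
- move=> _ [->|[->|[n [g ->]]]]; last exact: markov_shift_cylinder.
    change (P (shift @^-1` setT `&` [set w | w 1%N = h]) =
      (nu h)%:E * P (lact h @^-1` setT)).
    rewrite !preimage_setT setTI probability_setT mule1.
    have -> : [set w : Om | w 1%N = h] = shift @^-1` cylinder 0 (fun=> h).
      by apply/seteqP; split => [w wh k|w /(_ 0%N isT)//]; rewrite leqn0 => /eqP ->.
    by rewrite measure_shift_cylinder big_ord0 mulr1.
  by rewrite !measure0.
- move=> _; apply: (le_lt_trans (probability_le1 P _)); last exact: ltry.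
  apply: measurableI; last exact: measurable_coord_eq.
  exact: measurable_preimage_shift.
Qed.

Lemma shift_invariantC A : shift_invariant A -> shift_invariant (~` A).
Proof. by case=> mA sA; split; [exact: measurableC|rewrite -preimage_setC sA]. Qed.

(* For invariant [A], [shift_markov] reads
   [P (A `&` [set w | w 1 = h]) = nu h * P (lact h @^-1` A)], and [nu h > 0]. *)
Lemma lact_null h A : shift_invariant A -> P A = 0 -> P (lact h @^-1` A) = 0.
Proof.
move=> [mA sA] PA0; have := shift_markov h mA; rewrite sA.
rewrite (@subset_measure0 _ _ _ P _ A) //.
  by move/esym/eqP; rewrite mule_eq0 eqe gt_eqF // => /eqP.
exact: measurableI (measurable_coord_eq _ _).
Qed.

Lemma lact_full h A : shift_invariant A -> P A = 1 -> P (lact h @^-1` A) = 1.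
Proof.
move=> Ainv PA1; have [mA _] := Ainv; have mL := measurable_preimage_lact h mA.
have PCL : P (~` (lact h @^-1` A)) = 0.
  rewrite preimage_setC.
  exact: lact_null (shift_invariantC Ainv) (probability_setC0 mA PA1).
by rewrite -[lact h @^-1` A]setCK probability_setC ?PCL ?sube0 //; exact: measurableC.
Qed.

Lemma ae_lact_iff h A : shift_invariant A -> P A = 0 \/ P A = 1 ->
  {ae P, forall w, A w <-> A (lact h w)}.
Proof.
move=> Ainv; have [mA _] := Ainv; have mL := measurable_preimage_lact h mA.
case=> [PA0|PA1].
  apply: filterS2 (ae_notin_null mA PA0) (ae_notin_null mL (lact_null h Ainv PA0)).
  by move=> w nA nL; split => ?; exfalso; [exact: nA|exact: nL].
apply: filterS2 (ae_in_full mA PA1) (ae_in_full mL (lact_full h Ainv PA1)).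
by move=> w Aw Lw; split.
Qed.

Lemma invariant_measure01 A : ~ boundary_nontrivial P -> shift_invariant A ->
  P A = 0 \/ P A = 1.
Proof.
move=> trivial Ainv; have [mA _] := Ainv.
have [PA1|PA1] := eqVneq (P A) 1; [by right|left].
apply/eqP; rewrite eq_le measure_ge0 andbT leNgt; apply/negP => PA_gt0.
by apply: trivial; exists A; do 2!split => //; rewrite lt_neqAle PA1 probability_le1.
Qed.

Lemma boundary_nontrivial_of_free h : h <> 1%g ->
  boundary_essentially_free P -> boundary_nontrivial P.
Proof.
move=> h1 free; apply: contrapT => trivial.
have [A [Ainv Asep]] := free h h1.
have Aiff := ae_foralln
  (fun k => ae_lact_iff h (Ainv k) (invariant_measure01 trivial (Ainv k))).
have aeFalse : {ae P, forall w : Om, False}.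
  apply: filterS2 Asep Aiff => w [k [[Aw nL]|[nA Lw]]] /(_ k) [AL LA].
    by apply: nL; exact: AL.
  by apply: nA; exact: LA.
by have [] := probability_ae_ex aeFalse.
Qed.

End MarkovProperty.

Section RankedParent.
Variable G : countGroupType.
Variables (W W' : nat -> set G) (p : G -> G).
Hypothesis W'W : forall i, W' i `<=` W i.
Hypothesis Wdisj : forall i j : nat, i <> j -> W i `&` W j = set0.
Hypothesis p_rank : forall g, (\bigcup_i W i) g -> (rank W (p g) < rank W g)%N.
Hypothesis p_equivariant : forall h : G, exists N : nat,
  forall i : nat, (N < i)%N -> [set (h * w)%g | w in W' i] `<=` W i /\
  (forall w : G, W' i w -> p (h * w)%g = (h * p w)%g).
Local Notation rank := (rank W).
Implicit Types (g h x : G) (w : Omega G).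

Lemma rankW j x : W j x -> rank x = j.
Proof.
move=> Wjx; rewrite /Defs.rank; case: pselect => [e|]; last by case; exists j.
case: cid => i /= Wix; apply: contrapT => ij.
by have := Wdisj ij; rewrite -subset0 => /(_ x) []; split.
Qed.

Lemma rankW' j x : W' j x -> rank x = j.
Proof. by move/W'W; exact: rankW. Qed.

Lemma p_equivariant_target h : exists N, forall j x, (N < j)%N ->
  W' j (h * x)%g -> p (h * x)%g = (h * p x)%g.
Proof.
have [N HN] := p_equivariant h^-1%g; exists N => j x Nj Wj.
by have := (HN j Nj).2 _ Wj; rewrite mulKg => ->; rewrite mulVKg.
Qed.

(* Along a trajectory, [infinitely_often (has_parent g)] says that points of
   arbitrarily high level [W' j] have parent [g], and
   [infinitely_often (descends_to g)] that they have [g] as an ancestor. *)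
Definition has_parent g (M : nat) x : Prop :=
  exists2 j, (M <= j)%N & W' j x /\ p x = g.

Definition descends_to g (M : nat) x : Prop :=
  exists2 j, (M <= j)%N & W' j x /\ exists n, iter n p (p x) = g.

Definition separating_family (k : nat) : set (Omega G) :=
  match (unpickle k : option (bool * G)) with
  | Some (false, g) => infinitely_often (has_parent g)
  | Some (true, g) => infinitely_often (descends_to g)
  | None => set0
  end.

Lemma separating_family_invariant k : shift_invariant (separating_family k).
Proof.
rewrite /separating_family; case: (unpickle k) => [[[] g]|].
- by apply: infinitely_often_invariant => M x [j Mj Qj]; exists j => //; exact: ltnW.
- by apply: infinitely_often_invariant => M x [j Mj Qj]; exists j => //; exact: ltnW.
- by split; [exact: measurable0|rewrite preimage_set0].
Qed.

Section Trajectory.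
Variables (w : Omega G) (i1 : nat).
Hypothesis w_W' : forall i, (i1 <= i)%N -> exists j, W' j (w i).
Hypothesis w_parent : forall i, (i1 <= i)%N ->
  p (w i.+1) = p (w i) \/ p (w i.+1) = w i.
Hypothesis w_rank : forall M, exists i, (M < rank (w i))%N.

Lemma deep_point M m : exists2 i, (m <= i)%N & exists2 j, (M <= j)%N & W' j (w i).
Proof.
have [i mi Mi] := unbounded_late w_rank M (maxn m i1).
have [j Wj] := w_W' (leq_trans (leq_maxr m i1) mi).
exists i; first exact: leq_trans (leq_maxl m i1) mi.
by exists j => //; rewrite -(rankW' Wj) ltnW.
Qed.

Lemma separate_constant_parent h m : h <> 1%g ->
  (forall i, (m <= i)%N -> p (w i.+1) = p (w i)) ->
  infinitely_often (has_parent (p (w m))) w /\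
  ~ infinitely_often (has_parent (p (w m))) (lact h w).
Proof.
move=> h1 pw_const.
have pw i : (m <= i)%N -> p (w i) = p (w m).
  elim: i => [|i IH]; first by rewrite leqn0 => /eqP ->.
  rewrite leq_eqVlt => /orP[/eqP <-//|]; rewrite ltnS => mi.
  by rewrite pw_const // IH.
split.
  move=> M; have [i mi [j Mj Wj]] := deep_point M (maxn M m).
  exists i; first exact: leq_trans (leq_maxl M m) mi.
  by exists j => //; split => //; apply: pw; exact: leq_trans (leq_maxr M m) mi.
have [N pN] := p_equivariant_target h.
move=> /(_ (maxn m N.+1)) [i mi [j Nj [Wj phw]]].
apply: h1; apply: (mulIg (p (w m))); rewrite mul1g -{2}phw /lact (pN j) //.
  by rewrite pw //; exact: leq_trans (leq_maxl m N.+1) mi.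
exact: leq_trans (leq_maxr m N.+1) Nj.
Qed.

Definition parent_time t := (i1 <= t)%N /\ p (w t.+1) = w t.

Lemma rank_parent_lt i : (i1 <= i)%N -> (rank (p (w i)) < rank (w i))%N.
Proof. by move=> /w_W' [j /W'W Wj]; apply: p_rank; exists j. Qed.

Lemma last_parent_time t i : parent_time t -> (t < i)%N ->
  exists s, [/\ (t <= s)%N, (s < i)%N, parent_time s & p (w i) = w s].
Proof.
move=> [it pt]; elim: i => // i IH; rewrite ltnS leq_eqVlt => /orP[/eqP <-|ti].
  by exists t; split.
have [s [ts si sp ps]] := IH ti.
have [->|pi] := w_parent (leq_trans it (ltnW ti)).
  by exists s; split => //; exact: ltnW.
by exists i; split => //; [exact: ltnW|split => //; exact: leq_trans it (ltnW ti)].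
Qed.

Lemma parent_time_ancestor t i : parent_time t -> (t < i)%N ->
  exists n, iter n p (p (w i)) = w t.
Proof.
move=> tp; elim/ltn_ind: i => i IH ti.
have [s [ts si sp ->]] := last_parent_time tp ti.
move: ts; rewrite leq_eqVlt => /orP[/eqP->|ts]; first by exists 0%N.
by have [n ps] := IH s si ts; exists n.+1; rewrite iterSr.
Qed.

Lemma parent_time_rank_lt t i : parent_time t -> (t < i)%N ->
  (rank (w t) < rank (w i))%N.
Proof.
move=> tp; elim/ltn_ind: i => i IH ti.
have [s [ts si sp ps]] := last_parent_time tp ti.
apply: leq_ltn_trans (rank_parent_lt (leq_trans (proj1 tp) (ltnW ti))).
rewrite ps; move: ts; rewrite leq_eqVlt => /orP[/eqP->//|ts].
exact: ltnW (IH s si ts).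
Qed.

Hypothesis w_parent_times : forall m, exists2 t, (m <= t)%N & parent_time t.

Lemma parent_time_rank_gt B m :
  exists t, [/\ (m <= t)%N, parent_time t & (B < rank (w t))%N].
Proof.
elim: B => [|B [t [mt tp Bt]]].
  have [t mt tp] := w_parent_times m; exists t; split => //.
  exact: leq_ltn_trans (leq0n _) (rank_parent_lt (proj1 tp)).
have [t' tt' t'p] := w_parent_times t.+1; exists t'; split => //.
  exact: leq_trans mt (ltnW tt').
exact: leq_ltn_trans Bt (parent_time_rank_lt tp tt').
Qed.

Lemma descends_parent_time t : parent_time t -> infinitely_often (descends_to (w t)) w.
Proof.
move=> tp M; have [i ti [j Mj Wj]] := deep_point M (maxn M t.+1).
exists i; first exact: leq_trans (leq_maxl M t.+1) ti.
exists j => //; split => //.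
by apply: parent_time_ancestor => //; exact: leq_trans (leq_maxr M t.+1) ti.
Qed.

(* Were all later parent-time points ancestors of [y], the orbit of [y] under
   [p] would be finite, contradicting the unbounded ranks, or injective, and
   then the orbit positions of successive parent-time points would decrease
   forever. *)
Lemma not_all_parent_times_descend y t0 :
  ~ (forall t, parent_time t -> (t0 < t)%N -> exists n, iter n p y = w t).
Proof.
move=> all_descend.
have [[a [b [ab eab]]]|inj] :=
  pselect (exists a b, (a < b)%N /\ iter a p y = iter b p y).
  have [t [tt tp Bt]] := parent_time_rank_gt (\max_(k < b) rank (iter k p y)) t0.+1.
  have [n en] := all_descend t tp tt.
  have [n' n'b e'] := iter_cycle_bounded ab eab n.
  move: Bt; rewrite -en e' ltnNge => /negP; apply.
  exact: (leq_bigmax (Ordinal n'b)).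
have iter_inj m n : iter m p y = iter n p y -> m = n.
  move=> e; apply: contrapT => mn; apply: inj.
  by case: (ltngtP m n) => // [mn'|nm]; [exists m, n|exists n, m].
suff no_parent_time n t : parent_time t -> (t0 < t)%N -> iter n p y = w t -> False.
  have [t tt tp] := w_parent_times t0.+1; have [n en] := all_descend t tp tt.
  exact: no_parent_time en.
elim/ltn_ind: n t => n IH t tp tt en.
have [t' tt' t'p] := w_parent_times t.+1.
have t0t' := ltn_trans tt tt'.
have [n' en'] := all_descend t' t'p t0t'.
have [m em] := parent_time_ancestor tp tt'.
apply: (IH n' _ t' t'p t0t' en').
have -> : n = (m.+1 + n')%N by apply: iter_inj; rewrite en iterD en' iterSr em.
by rewrite addSn ltnS leq_addl.
Qed.

Section Translate.
Variables (h : G) (N t0 : nat).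
Hypothesis h1 : h <> 1%g.
Hypothesis hN : forall i, (N < i)%N ->
  [set (h * x)%g | x in W' i] `<=` W i /\
  (forall x, W' i x -> p (h * x)%g = (h * p x)%g).
Hypothesis t0_parent_time : parent_time t0.
Hypothesis rank_t0 : (N < rank (w t0))%N.

Lemma lact_after_t0 s : (t0 <= s)%N ->
  p (h * w s)%g = (h * p (w s))%g /\ rank (h * w s)%g = rank (w s).
Proof.
move=> ts; have [j Wj] := w_W' (leq_trans (proj1 t0_parent_time) ts).
have Nj : (N < j)%N.
  rewrite -(rankW' Wj); move: ts; rewrite leq_eqVlt => /orP[/eqP<-//|ts].
  exact: ltn_trans rank_t0 (parent_time_rank_lt t0_parent_time ts).
have [hW hp] := hN Nj; split; first exact: hp.
by rewrite (rankW' Wj); apply: rankW; apply: hW; exists (w s).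
Qed.

(* The ancestors of a translated parent-time point are translated parent-time
   points down to time [t0], and then ancestors of [h * p (w t0)]. *)
Lemma lact_parent_time_ancestors s n z : (t0 <= s)%N -> parent_time s ->
  iter n p (h * w s)%g = z ->
  (exists s', [/\ (t0 <= s')%N, (s' <= s)%N, parent_time s' & z = (h * w s')%g]) \/
  (exists n', iter n' p (h * p (w t0))%g = z).
Proof.
elim/ltn_ind: s n => s IH [|n] ts sp; first by move=> <-; left; exists s; split.
rewrite iterSr (lact_after_t0 ts).1.
move: ts; rewrite leq_eqVlt => /orP[/eqP<-|ts]; first by right; exists n.
have [s' [ts' s's s'p ->]] := last_parent_time t0_parent_time ts.
move=> /(IH s' s's n ts' s'p) [[s'' [? ? ? ?]]|]; last by right.
by left; exists s''; split => //; exact: leq_trans (ltnW s's).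
Qed.

Lemma descends_lact_parent_time t : parent_time t -> (t0 < t)%N ->
  infinitely_often (descends_to (w t)) (lact h w) ->
  exists n, iter n p (h * p (w t0))%g = w t.
Proof.
move=> tp tt; have [N' pN'] := p_equivariant_target h.
move=> /(_ (maxn N'.+1 t.+1)) [i Mi [j Mj [Wj [n en]]]].
rewrite /lact (pN' j) in en; last 2 first.
- exact: leq_trans (leq_maxl N'.+1 t.+1) Mj.
- exact: Wj.
have ti : (t0 < i)%N by apply: ltn_trans tt (leq_trans (leq_maxr _ _) Mi).
have [s [ts si sp ps]] := last_parent_time t0_parent_time ti.
rewrite ps in en.
have [[s' [ts' s's s'p ets']]|//] := lact_parent_time_ancestors ts sp en.
exfalso; have rank_eq : rank (w t) = rank (w s') by rewrite ets' (lact_after_t0 ts').2.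
have [lt_ts'|lt_s't|tEs'] := ltngtP t s'.
- by have := parent_time_rank_lt tp lt_ts'; rewrite rank_eq ltnn.
- by have := parent_time_rank_lt s'p lt_s't; rewrite rank_eq ltnn.
by apply: h1; apply: (mulIg (w t)); rewrite mul1g {2}ets' tEs'.
Qed.

End Translate.

Lemma separate_parent_times h : h <> 1%g -> exists t,
  infinitely_often (descends_to (w t)) w /\
  ~ infinitely_often (descends_to (w t)) (lact h w).
Proof.
move=> h1; have [N hN] := p_equivariant h.
have [t0 [_ t0p Nt0]] := parent_time_rank_gt N 0.
apply: contrapT => none.
apply: (@not_all_parent_times_descend (h * p (w t0))%g t0) => t tp tt.
apply: (descends_lact_parent_time h1 hN t0p Nt0 tp tt); apply: contrapT => nL.
by apply: none; exists t; split => //; exact: descends_parent_time.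
Qed.

End Trajectory.

Lemma separating_family_separates w h :
  (exists i0, forall i, (i0 < i)%N -> exists j, W' j (w i)) ->
  (exists i0, forall i, (i0 < i)%N -> p (w i.+1) = p (w i) \/ p (w i.+1) = w i) ->
  (forall M, exists i, (M < rank (w i))%N) -> h <> 1%g ->
  exists k, separating_family k w /\ ~ separating_family k (lact h w).
Proof.
move=> [a wa] [b wb] w_rank h1; pose i1 := (maxn a b).+1.
have w_W' i : (i1 <= i)%N -> exists j, W' j (w i) by move=> ?; apply: wa; lia.
have w_parent i : (i1 <= i)%N -> p (w i.+1) = p (w i) \/ p (w i.+1) = w i.
  by move=> ?; apply: wb; lia.
have [[m pw_const]|nconst] :=
  pselect (exists m, forall i, (m <= i)%N -> p (w i.+1) = p (w i)).
  exists (pickle (false, p (w m))); rewrite /separating_family pickleK /=.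
  exact: (separate_constant_parent w_W' w_rank h1 pw_const).
have w_parent_times m : exists2 t, (m <= t)%N & parent_time w i1 t.
  apply: contrapT => no_parent_time; apply: nconst; exists (maxn m i1) => i mi.
  have [//|pi] := w_parent i (leq_trans (leq_maxr m i1) mi).
  exfalso; apply: no_parent_time; exists i; first exact: leq_trans (leq_maxl m i1) mi.
  by split => //; exact: leq_trans (leq_maxr m i1) mi.
have [t [wt nwt]] := separate_parent_times w_W' w_parent w_rank w_parent_times h1.
by exists (pickle (true, w t)); rewrite /separating_family pickleK.
Qed.

End RankedParent.

Theorem lemma1 (R : realType) (G : countGroupType) (nu : G -> R)
  (nu_full : forall g : G, (0 < nu g)%R)
  (nu_prob : (\esum_(g in [set: G]) (nu g)%:E)%R = 1%E)
  (P : probability (Omega G) R) (P_law : random_walk_law nu P)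
  (W W' : nat -> set G)
  (W'W : forall i, W' i `<=` W i)
  (Wdisj : forall i j : nat, i <> j -> W i `&` W j = set0)
  (p : G -> G)
  (H1 : forall g : G, (\bigcup_i W i) g -> (rank W (p g) < rank W g)%N)
  (H2 : forall h : G, exists N : nat, forall i : nat, (N < i)%N ->
      [set (h * w)%g | w in W' i] `<=` W i /\
      (forall w : G, W' i w -> p (h * w)%g = (h * p w)%g))
  (H3 : {ae P, forall z : Omega G, exists i0 : nat, forall i : nat, (i0 < i)%N ->
      exists j : nat, W' j (z i)})
  (H4 : {ae P, forall z : Omega G, exists i0 : nat, forall i : nat, (i0 < i)%N ->
      p (z i.+1) = p (z i) \/ p (z i.+1) = z i})
  (H5 : {ae P, forall z : Omega G, forall M : nat, exists i : nat,
      (M < rank W (z i))%N}) :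
  boundary_nontrivial P /\ boundary_essentially_free P.
Proof.
have free : boundary_essentially_free P.
  move=> h h1; exists (separating_family W' p); split.
    exact: separating_family_invariant.
  apply: filterS3 H3 H4 H5 => w w3 w4 w5.
  have [k [wk nhwk]] := separating_family_separates W'W Wdisj H1 H2 w3 w4 w5 h1.
  by exists k; left.
split => //.
have [h h1] : exists h : G, h <> 1%g.
  have [w /(_ (rank W 1%g)) [i rank_wi]] := probability_ae_ex H5.
  by exists (w i) => wi1; move: rank_wi; rewrite wi1 ltnn.
exact: (boundary_nontrivial_of_free nu_full P_law h1 free).
Qed.
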